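(* Let $G$ be a graph and let $v$ be a cut vertex of $G$ which decomposes $G$ into $G_1=G(V_1)$ and $H=G(U)$, where $H$ is a cycle. Let $f$ be a divisor on $G$ such that $f_{N(H)}$ is good, and put $r=\rho_{G_1}(f_{G/H})$. Then $$\rho_G(f)=\begin{cases} r & \text{if } \rho_{G_1}(f_{G/H}-2\epsilon_v)\ge r-1,\\ r-1 & \text{if } \rho_{G_1}(f_{G/H}-2\epsilon_v)=r-2.\end{cases}$$
   Context: Graphs are finite, undirected, connected, loopless, possibly with multiple edges; $G(W)$ is the induced subgraph on $W$. A cycle is a connected graph with at least two vertices, all of degree $2$. A vertex $v$ is a cut vertex if removing it disconnects $G$; it decomposes $G$ into $G_1=G(V_1)$ and $H=G(U)$ if $V(G)=V_1\cup U$, $V_1\cap U=\{v\}$, both induced subgraphs are connected, and no edge joins $V_1\setminus\{v\}$ to $U\setminus\{v\}$. A divisor is a function $V\to\mathbb{Z}$, $\deg(f)=\sum f(u)$; $\epsilon_v$ is the divisor with value $1$ at $v$ and $0$ elsewhere. Contraction: $f_{G/H}$ is the divisor on $G_1$ with $f_{G/H}(u)=f(u)$ for $u\in V_1\setminus\{v\}$, $f_{G/H}(v)=\sum_{u\in U}f(u)$. Zero: $f_{N(H)}$ is the divisor on $H$ with $f_{N(H)}(u)=f(u)$ for $u\in U\setminus\{v\}$ and $f_{N(H)}(v)=-\sum_{u\in U\setminus\{v\}}f(u)$. Laplacian $\Delta_X(u,u)=\deg(u)$, $\Delta_X(u,w)=-e(u,w)$ for $u\ne w$; $f\sim g$ on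 $X$ if $g=f+x\Delta_X$, $x$ integral. Effective: all values $\ge0$; L-effective: equivalent to an effective divisor. A degree-$0$ divisor on the cycle $H$ is good if it is L-effective on $H$, bad otherwise. The rank $\rho_X(f)$ on a graph $X$ is $-1$ if $f$ is not L-effective on $X$, otherwise the largest $r\ge0$ with $f-\lambda$ L-effective on $X$ for all effective $\lambda$ of degree $r$ on $X$. *)

From Stdlib Require Import ClassicalEpsilon.
From mathcomp Require Import all_boot all_order all_algebra.
Set Implicit Arguments. Unset Strict Implicit. Unset Printing Implicit Defensive.
Import Order.TTheory GRing.Theory Num.Theory.
Local Open Scope ring_scope.

(* A multigraph on the finite vertex type T is given by the edge multiplicity
   function e : T -> T -> nat (e u w = number of edges joining u and w). *)
Definition multigraph (T : finType) (e : T -> T -> nat) : Prop :=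
  (forall u w, e u w = e w u) /\ (forall u, e u u = 0%N).

Definition adj_in (T : finType) (e : T -> T -> nat) (W : {set T}) : rel T :=
  fun x y => [&& x \in W, y \in W & (0 < e x y)%N].

Definition connected_in (T : finType) (e : T -> T -> nat) (W : {set T}) : Prop :=
  W != set0 /\ forall x y, x \in W -> y \in W -> connect (adj_in e W) x y.

Definition deg_in (T : finType) (e : T -> T -> nat) (W : {set T}) (u : T) : nat :=
  (\sum_(w in W) e u w)%N.

Definition is_cycle (T : finType) (e : T -> T -> nat) (U : {set T}) : Prop :=
  connected_in e U /\ (2 <= #|U|)%N /\ forall u, u \in U -> deg_in e U u = 2%N.

Definition cut_vertex (T : finType) (e : T -> T -> nat) (v : T) : Prop :=
  ~ connected_in e ([set: T] :\ v).

Definition decomposes (T : finType) (e : T -> T -> nat) (v : T) (V1 U : {set T}) : Prop :=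
  [/\ V1 :|: U = [set: T], V1 :&: U = [set v], connected_in e V1, connected_in e U
    & forall x y, x \in V1 :\ v -> y \in U :\ v -> e x y = 0%N].

(* Divisors on an induced subgraph G(W) are functions T -> int; only their
   values on W matter. *)
Definition divisor (T : finType) := T -> int.

Definition deg_div (T : finType) (W : {set T}) (f : divisor T) : int :=
  \sum_(u in W) f u.

Definition eps (T : finType) (v : T) : divisor T := fun u => (u == v)%:Z.

Definition lap (T : finType) (e : T -> T -> nat) (W : {set T}) (x : T -> int) (u : T) : int :=
  (deg_in e W u)%:Z * x u - \sum_(w in W | w != u) (e w u)%:Z * x w.

Definition linequiv (T : finType) (e : T -> T -> nat) (W : {set T}) (f g : divisor T) : Prop :=
  exists x : T -> int, forall u, u \in W -> g u = f u + lap e W x u.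

Definition effective (T : finType) (W : {set T}) (f : divisor T) : Prop :=
  forall u, u \in W -> 0 <= f u.

Definition Leffective (T : finType) (e : T -> T -> nat) (W : {set T}) (f : divisor T) : Prop :=
  exists g, linequiv e W f g /\ effective W g.

Definition rank_ge (T : finType) (e : T -> T -> nat) (W : {set T}) (f : divisor T) (n : nat) : Prop :=
  forall lam : divisor T, effective W lam -> deg_div W lam = n%:Z ->
    Leffective e W (fun u => f u - lam u).

Definition is_rank (T : finType) (e : T -> T -> nat) (W : {set T}) (f : divisor T) (r : int) : Prop :=
  (~ Leffective e W f /\ r = -1)
  \/ (Leffective e W f /\ exists n : nat, r = n%:Z /\ rank_ge e W f n
        /\ forall m : nat, rank_ge e W f m -> (m <= n)%N).

Definition rho (T : finType) (e : T -> T -> nat) (W : {set T}) (f : divisor T) : int :=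
  epsilon (inhabits 0) (is_rank e W f).

Definition f_contr (T : finType) (U : {set T}) (v : T) (f : divisor T) : divisor T :=
  fun u => if u == v then \sum_(w in U) f w else f u.

Definition f_zero (T : finType) (U : {set T}) (v : T) (f : divisor T) : divisor T :=
  fun u => if u == v then - \sum_(w in U | w != v) f w else f u.

(* a degree-0 divisor on the cycle H = G(U) is good iff L-effective on H *)
Definition good (T : finType) (e : T -> T -> nat) (U : {set T}) (f : divisor T) : Prop :=
  Leffective e U f.

(* A divisor on G is L-effective iff the chips at the cut vertex v can be
   shared between G1 and H so that both parts are L-effective.  As f_{N(H)} is
   good, it is principal on H, so the H-part of f - lambda is equivalent to
   j eps_v minus the chips of lambda on H - v.  On the cycle H (genus 1) every
   divisor of degree >= 1 is L-effective, while distinct vertices are never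
   equivalent, so a chip at w != v costs exactly two chips at v.  Hence
   rank_G f >= n iff r >= n and, when n > 0, rho_{G1}(f_{G/H} - 2 eps_v) >= n - 1,
   that is rho_G f = min(r, rho_{G1}(f_{G/H} - 2 eps_v) + 1).  The two facts
   about cycles are proved with v-reduced divisors and Dhar's burning
   argument. *)

From Stdlib Require Import ClassicalEpsilon.
From mathcomp Require Import all_boot all_order all_algebra zify.
Import Order.TTheory GRing.Theory Num.Theory.
Local Open Scope ring_scope.
Set Implicit Arguments. Unset Strict Implicit. Unset Printing Implicit Defensive.

Lemma Posz_sum (I : finType) (P : pred I) (F : I -> nat) :
  (\sum_(i | P i) F i)%N%:Z = \sum_(i | P i) (F i)%:Z.
Proof. exact: (big_morph Posz PoszD (erefl _)). Qed.

Section Laplacian.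

Variables (T : finType) (e : T -> T -> nat).
Hypothesis e_graph : multigraph e.
Implicit Types (W S : {set T}) (x y : T -> int).

Definition outdeg W S u : int := \sum_(b in W :\: S) (e u b)%:Z.

Definition cut_size W S : int := \sum_(a in S) outdeg W S a.

Lemma lapE W x u :
  lap e W x u = \sum_(w in W) (e u w)%:Z * (x u - x w).
Proof.
have [e_sym e_loop] := e_graph.
rewrite /lap /deg_in Posz_sum mulr_suml.
have -> : \sum_(w in W | w != u) (e w u)%:Z * x w = \sum_(w in W) (e u w)%:Z * x w.
  symmetry; rewrite (bigID (pred1 u)) /= big1 ?add0r; last first.
    by move=> w /andP[_ /eqP ->]; rewrite e_loop mul0r.
  by apply: eq_bigr => w _; rewrite e_sym.
by rewrite -sumrB; apply: eq_bigr => w _; rewrite mulrBr.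
Qed.

Lemma lapD W x y u : lap e W (fun w => x w + y w) u = lap e W x u + lap e W y u.
Proof.
rewrite !lapE -big_split /=; apply: eq_bigr => w _.
by rewrite -mulrDr opprD addrACA.
Qed.

Lemma lapN W x u : lap e W (fun w => - x w) u = - lap e W x u.
Proof.
rewrite !lapE -sumrN; apply: eq_bigr => w _.
by rewrite -mulrN opprB opprK addrC.
Qed.

Lemma lapZ W (c : int) x u : lap e W (fun w => c * x w) u = c * lap e W x u.
Proof.
rewrite !lapE mulr_sumr; apply: eq_bigr => w _.
by rewrite -mulrBr mulrCA.
Qed.

Lemma lap_addc W x (c : int) u : lap e W (fun w => x w + c) u = lap e W x u.
Proof.
rewrite !lapE; apply: eq_bigr => w _.
by rewrite opprD addrACA subrr addr0.
Qed.

Lemma lap0 W u : lap e W (fun _ => 0) u = 0.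
Proof. by rewrite lapE big1 // => w _; rewrite subrr mulr0. Qed.

Lemma eq_lap W x y u : {in W, x =1 y} -> u \in W -> lap e W x u = lap e W y u.
Proof. by move=> xy uW; rewrite !lapE; apply: eq_bigr => w wW; rewrite !xy. Qed.

(* Edges inside [S] cancel in pairs. *)
Lemma sum_lap_sub W S x : S \subset W ->
  \sum_(u in S) lap e W x u = \sum_(a in S) \sum_(b in W :\: S) (e a b)%:Z * (x a - x b).
Proof.
have [e_sym _] := e_graph; move=> SW.
have inner0 : \sum_(a in S) \sum_(b in S) (e a b)%:Z * (x a - x b) = 0.
  rewrite (eq_bigr (fun a => \sum_(b in S) ((e a b)%:Z * x a - (e a b)%:Z * x b))); last first.
    by move=> a _; apply: eq_bigr => b _; rewrite mulrBr.
  rewrite (eq_bigr (fun a => \sum_(b in S) (e a b)%:Z * x a - \sum_(b in S) (e a b)%:Z * x b));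
    last by move=> a _; rewrite sumrB.
  rewrite sumrB [X in _ - X]exchange_big /=; apply/eqP; rewrite subr_eq0; apply/eqP.
  by apply: eq_bigr => a _; apply: eq_bigr => b _; rewrite e_sym.
have -> : \sum_(u in S) lap e W x u = \sum_(a in S) (\sum_(b in S) (e a b)%:Z * (x a - x b)
   + \sum_(b in W :\: S) (e a b)%:Z * (x a - x b)).
  apply: eq_bigr => a _; rewrite lapE (big_setID S) /=; congr (_ + _); apply: eq_bigl => b.
  by rewrite in_setI andbC; case: (boolP (b \in S)) => // /(subsetP SW) ->.
by rewrite big_split /= inner0 add0r.
Qed.

Lemma sum_lap W x : \sum_(u in W) lap e W x u = 0.
Proof. by rewrite sum_lap_sub // setDv; apply: big1 => a _; rewrite big_set0. Qed.

Lemma lap_indicator_mem W S u : u \in S ->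
  lap e W (fun b => (b \in S)%:Z) u = outdeg W S u.
Proof.
move=> uS; rewrite lapE (big_setID S) /= big1 ?add0r; last first.
  by move=> b; rewrite in_setI => /andP[_ ->]; rewrite uS subrr mulr0.
by apply: eq_bigr => b; rewrite in_setD uS => /andP[/negbTE -> _]; rewrite subr0 mulr1.
Qed.

Lemma lap_indicator_notin W S u : u \notin S ->
  lap e W (fun b => (b \in S)%:Z) u = - \sum_(b in W :&: S) (e u b)%:Z.
Proof.
move=> uS; rewrite lapE (big_setID S) /= [X in _ + X]big1 ?addr0; last first.
  by move=> b; rewrite in_setD => /andP[/negbTE -> _]; rewrite (negbTE uS) subrr mulr0.
rewrite -sumrN; apply: eq_bigr => b; rewrite in_setI => /andP[_ ->].
by rewrite (negbTE uS) sub0r mulrN1.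
Qed.

End Laplacian.

Section LinearEquivalence.

Variables (T : finType) (e : T -> T -> nat) (W : {set T}).
Hypothesis e_graph : multigraph e.

Lemma eq_Leffective (f g : divisor T) :
  {in W, f =1 g} -> Leffective e W f -> Leffective e W g.
Proof.
move=> fg [E [[x Ex] E_eff]]; exists E; split=> //; exists x => u uW.
by rewrite Ex // fg.
Qed.

Lemma Leffective_add_effective (f h : divisor T) :
  Leffective e W f -> effective W h -> Leffective e W (fun u => f u + h u).
Proof.
move=> [E [[x Ex] E_eff]] h_eff; exists (fun u => E u + h u); split.
  by exists x => u uW /=; rewrite Ex // addrAC.
by move=> u uW; rewrite addr_ge0 ?E_eff ?h_eff.
Qed.

Lemma effective_Leffective (f : divisor T) : effective W f -> Leffective e W f.
Proof.
by move=> f_eff; exists f; split => //; exists (fun _ => 0) => u uW; rewrite lap0 // addr0.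
Qed.

Lemma linequiv_deg (f g : divisor T) :
  linequiv e W f g -> \sum_(u in W) g u = \sum_(u in W) f u.
Proof.
move=> [x gx]; rewrite (eq_bigr (fun u => f u + lap e W x u)) //.
by rewrite big_split /= sum_lap // addr0.
Qed.

Lemma Leffective_deg_ge0 (f : divisor T) : Leffective e W f -> 0 <= \sum_(u in W) f u.
Proof.
by move=> [E [fE E_eff]]; rewrite -(linequiv_deg fE); apply: sumr_ge0.
Qed.

Lemma Leffective_deg0 (f : divisor T) :
  Leffective e W f -> \sum_(u in W) f u = 0 ->
  exists x, forall u, u \in W -> f u + lap e W x u = 0.
Proof.
move=> [E [[x Ex] E_eff]] deg0; exists x => u uW; rewrite -Ex //.
have : \sum_(u in W) E u = 0 by rewrite (linequiv_deg (ex_intro _ x Ex)).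
by move/psumr_eq0P; apply.
Qed.

Lemma Leffective_add_principal (x : T -> int) (f h : divisor T) :
  (forall u, u \in W -> f u + lap e W x u = 0) ->
  Leffective e W (fun u => f u + h u) <-> Leffective e W h.
Proof.
move=> fx; split=> -[E [[y Ey] E_eff]]; exists E; split=> //.
  exists (fun u => y u - x u) => u uW.
  by have := fx u uW; have := Ey u uW; rewrite /= lapD // lapN //; lia.
exists (fun u => x u + y u) => u uW.
by have := fx u uW; have := Ey u uW; rewrite /= lapD //; lia.
Qed.

End LinearEquivalence.

Lemma classic_ex_maxn (P : nat -> Prop) (B : nat) :
  P 0%N -> (forall n, P n -> (n <= B)%N) -> exists n, P n /\ forall m, P m -> (m <= n)%N.
Proof.
elim: B => [|B IH] P0 leB; first by exists 0%N; split => // m /leB.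
have [PB|nPB] := classic (P B.+1); first by exists B.+1.
apply: IH => // n Pn; move: (leB n Pn); rewrite leq_eqVlt => /orP[/eqP nB|//].
by rewrite nB in Pn.
Qed.

Lemma classic_ex_minn (P : nat -> Prop) :
  (exists n, P n) -> exists n, P n /\ forall m, P m -> (n <= m)%N.
Proof.
move=> [n Pn]; elim: n {-2}n (leqnn n) Pn => [|k IH] n le_nk Pn.
  by exists n; split => // m _; move: le_nk; rewrite leqn0 => /eqP ->.
have [[m [Pm m_lt]]|] := classic (exists m, P m /\ (m < n)%N).
  by apply: (IH m) => //; rewrite -ltnS (leq_trans m_lt).
move=> none; exists n; split => // m Pm; rewrite leqNgt; apply/negP => mn.
by apply: none; exists m.
Qed.

Lemma sum_le_term (I : finType) (A : {pred I}) (F : I -> int) i :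
  i \in A -> (forall j, j \in A -> F j <= 0) -> \sum_(j in A) F j <= F i.
Proof.
by move=> iA F_le0; rewrite (bigD1 i) //= gerDl; apply: sumr_le0 => j /andP[jA _]; apply: F_le0.
Qed.

Lemma term_le_sum (I : finType) (A : {pred I}) (F : I -> int) i :
  i \in A -> (forall j, j \in A -> 0 <= F j) -> F i <= \sum_(j in A) F j.
Proof.
by move=> iA F_ge0; rewrite (bigD1 i) //= lerDl; apply: sumr_ge0 => j /andP[jA _]; apply: F_ge0.
Qed.

Lemma sumr_setD1 (I : finType) (A : {set I}) (F : I -> int) a :
  a \in A -> \sum_(i in A) F i = F a + \sum_(i in A :\ a) F i.
Proof. exact: big_setD1. Qed.

Lemma sum_eps (T : finType) (W : {set T}) (w0 : T) (c : int) :
  w0 \in W -> \sum_(u in W) c * eps w0 u = c.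
Proof.
move=> w0W; rewrite (bigD1 w0) //= big1 ?addr0; first by rewrite /eps eqxx mulr1.
by move=> u /andP[_ /negbTE uw0]; rewrite /eps uw0 mulr0.
Qed.

Lemma sum_eps1 (T : finType) (W : {set T}) (w0 : T) :
  w0 \in W -> \sum_(u in W) eps w0 u = 1.
Proof. by move=> w0W; rewrite -[RHS](sum_eps 1 w0W); apply: eq_bigr => u _; rewrite mul1r. Qed.

Section Rank.

Variables (T : finType) (e : T -> T -> nat) (W : {set T}) (w0 : T).
Hypotheses (e_graph : multigraph e) (w0W : w0 \in W).
Implicit Type f : divisor T.

Lemma rank_ge_le f m n : (m <= n)%N -> rank_ge e W f n -> rank_ge e W f m.
Proof.
move=> mn f_n lam lam_eff deg_lam.
pose pad u := (n - m)%N%:Z * eps w0 u.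
have pad_eff : effective W pad by move=> u _; rewrite mulr_ge0.
have lam_pad_eff : effective W (fun u => lam u + pad u).
  by move=> u uW; rewrite addr_ge0 ?lam_eff ?pad_eff.
have lam_pad_deg : deg_div W (fun u => lam u + pad u) = n%:Z.
  by rewrite /deg_div big_split /= sum_eps //; move: deg_lam; rewrite /deg_div => ->; lia.
have := Leffective_add_effective (f_n _ lam_pad_eff lam_pad_deg) pad_eff.
by apply: eq_Leffective => u _; lia.
Qed.

Lemma rank_ge0 f : rank_ge e W f 0 <-> Leffective e W f.
Proof.
split=> [f_0|f_eff lam lam_eff].
  have := f_0 (fun _ => 0) (fun _ _ => lexx 0).
  rewrite /deg_div big1 // => /(_ erefl); apply: eq_Leffective => u _; exact: subr0.
rewrite /deg_div => /eqP; rewrite psumr_eq0 // => /allP lam0.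
apply: eq_Leffective f_eff => u uW.
by have := lam0 u (mem_index_enum u); rewrite uW => /eqP ->; rewrite subr0.
Qed.

Lemma rank_ge_Leffective f n : rank_ge e W f n -> Leffective e W f.
Proof. by move/(rank_ge_le (leq0n n))/rank_ge0. Qed.

Lemma rank_ge_deg f n : rank_ge e W f n -> n%:Z <= \sum_(u in W) f u.
Proof.
move=> f_n; have lam_eff : effective W (fun u => n%:Z * eps w0 u) by move=> u _; rewrite mulr_ge0.
have := f_n _ lam_eff; rewrite /deg_div sum_eps // => /(_ erefl) /(Leffective_deg_ge0 e_graph).
by rewrite sumrB sum_eps // subr_ge0.
Qed.

Lemma rho_spec f : is_rank e W f (rho e W f).
Proof.
apply: epsilon_spec.
have [f_eff|] := classic (Leffective e W f); last by exists (-1); left.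
have [n [f_n n_max]] : exists n, rank_ge e W f n /\ forall m, rank_ge e W f m -> (m <= n)%N.
  apply: (classic_ex_maxn (B := absz (\sum_(u in W) f u))); first exact/rank_ge0.
  by move=> n /rank_ge_deg; lia.
by exists n%:Z; right; split => //; exists n.
Qed.

Lemma rho_ge_m1 f : -1 <= rho e W f.
Proof. by case: (rho_spec f) => [[_ ->] | [_ [n [-> _]]]]. Qed.

Lemma le_rho f n : n%:Z <= rho e W f <-> rank_ge e W f n.
Proof.
case: (rho_spec f) => [[f_neff ->] | [_ [N [-> [f_N N_max]]]]].
  by split => // /rank_ge_Leffective.
by rewrite lez_nat; split => [nN | /N_max //]; apply: rank_ge_le nN f_N.
Qed.

End Rank.

Section CutVertex.

Variables (T : finType) (e : T -> T -> nat) (v : T) (V1 U : {set T}).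
Hypotheses (e_graph : multigraph e) (vV1U : decomposes e v V1 U).

Lemma decomposes_vV1U : v \in V1 :&: U.
Proof. by case: vV1U => _ -> *; rewrite set11. Qed.

Lemma decomposes_vV1 : v \in V1.
Proof. by have /setIP[] := decomposes_vV1U. Qed.

Lemma decomposes_vU : v \in U.
Proof. by have /setIP[] := decomposes_vV1U. Qed.

Lemma decomposes_notin_V1 u : (u \notin V1) = (u \in U) && (u != v).
Proof.
case: vV1U => V1UT V1IU _ _ _.
have /setP/(_ u) := V1IU; have := in_setT u; rewrite -V1UT !inE.
by case: (u \in V1); case: (u \in U); case: (u == v).
Qed.

Lemma decomposes_U_notin_V1 u : u \in U -> u != v -> u \notin V1.
Proof. by move=> uU uv; rewrite decomposes_notin_V1 uU. Qed.

Lemma decomposes_V1U_eq w : w \in V1 -> w \in U -> w = v.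
Proof.
move=> wV1 wU; apply/eqP; move: wV1; apply: contraLR => wv.
by rewrite decomposes_notin_V1 wU.
Qed.

Lemma decomposes_sum (h : T -> int) :
  \sum_(w in [set: T]) h w = \sum_(w in V1) h w + \sum_(w in U | w != v) h w.
Proof.
rewrite (big_setID V1) /= setTI; congr (_ + _).
by apply: eq_bigl => w; rewrite setTD in_setC decomposes_notin_V1.
Qed.

Lemma lap_cut_vertex x : lap e [set: T] x v = lap e V1 x v + lap e U x v.
Proof.
rewrite !lapE // decomposes_sum [\sum_(w in U) _](bigD1 v) ?decomposes_vU //=.
by rewrite subrr mulr0 add0r.
Qed.

Lemma lap_V1 x u : u \in V1 -> u != v -> lap e [set: T] x u = lap e V1 x u.
Proof.
case: vV1U => _ _ _ _ no_edge uV1 uv.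
rewrite !lapE // decomposes_sum [X in _ + X]big1 ?addr0 // => w /andP[wU wv].
by rewrite no_edge ?mul0r // !inE ?uv ?wv.
Qed.

Lemma lap_U x u : u \in U -> u != v -> lap e [set: T] x u = lap e U x u.
Proof.
have [e_sym _] := e_graph; case: vV1U => _ _ _ _ no_edge uU uv.
rewrite !lapE // decomposes_sum (bigD1 v) ?decomposes_vV1 // [in RHS](bigD1 v) ?decomposes_vU //=.
rewrite [X in _ + X + _]big1 ?addr0 // => w /andP[wV1 wv].
by rewrite e_sym no_edge ?mul0r // !inE ?uv ?wv.
Qed.

Lemma Leffective_glue (F : divisor T) :
  Leffective e [set: T] F <->
  exists k, Leffective e V1 (fun u => if u == v then F v - k else F u) /\
            Leffective e U (fun u => if u == v then k else F u).
Proof.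
have vV1 := decomposes_vV1; have vU := decomposes_vU.
have inU u : u \notin V1 -> u \in U.
  by rewrite decomposes_notin_V1 => /andP[].
split=> [[E [[x Ex] E_eff]] | [k [[E1 [[x1 E1x] E1_eff]] [E2 [[x2 E2x] E2_eff]]]]].
  exists (- lap e U x v); split.
    exists E; split; last by move=> u _; apply: E_eff; rewrite in_setT.
    exists x => u uV1; have := Ex u (in_setT u).
    case: (eqVneq u v) => [->|uv]; last by rewrite lap_V1.
    by rewrite lap_cut_vertex => ->; rewrite opprK; lia.
  exists (fun u => if u == v then 0 else E u); split; last first.
    by move=> u _; case: ifP => // _; apply: E_eff; rewrite in_setT.
  exists x => u uU; have := Ex u (in_setT u).
  by case: (eqVneq u v) => [->|uv] /=; [rewrite addNr | rewrite lap_U].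
pose c := x1 v - x2 v.
pose x u := if u \in V1 then x1 u else x2 u + c.
have lapx1 u : u \in V1 -> lap e V1 x u = lap e V1 x1 u.
  by apply: eq_lap => // w wV1; rewrite /x wV1.
have lapx2 u : u \in U -> lap e U x u = lap e U x2 u.
  move=> uU; rewrite -[RHS](lap_addc e_graph _ _ c); apply: eq_lap => // w wU.
  rewrite /x; case: ifP => // wV1.
  by rewrite (decomposes_V1U_eq wV1 wU) /c; lia.
exists (fun u => if u == v then E1 v + E2 v else if u \in V1 then E1 u else E2 u); split.
  exists x => u _ /=; case: (eqVneq u v) => [->|uv].
    by rewrite lap_cut_vertex lapx1 // lapx2 // E1x // E2x // !eqxx; lia.
  case: ifP => uV1; first by rewrite lap_V1 // lapx1 // E1x // (negbTE uv).
  by rewrite lap_U ?inU ?uV1 // lapx2 ?inU ?uV1 // E2x ?inU ?uV1 // (negbTE uv).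
move=> u _; case: ifP => _; first by rewrite addr_ge0 ?E1_eff ?E2_eff.
by case: ifP => uV1; [apply: E1_eff | apply: E2_eff; rewrite inU ?uV1].
Qed.

Variable f : divisor T.
Hypothesis f_good : good e U (f_zero U v f).

(* Since [f_zero] is principal on H, the part of [f] on H is equivalent there
   to its total weight placed at the cut vertex. *)
Lemma Leffective_glue_good (lam : divisor T) :
  Leffective e [set: T] (fun u => f u - lam u) <->
  exists j : int, Leffective e V1 (fun u => f_contr U v f u - lam u - j * eps v u) /\
                  Leffective e U (fun u => j * eps v u - (if u == v then 0 else lam u)).
Proof.
have vU := decomposes_vU.
set s := \sum_(w in U | w != v) f w.
have fcv : f_contr U v f v = f v + s by rewrite /f_contr eqxx (bigD1 v).
have fzv : f_zero U v f v = - s by rewrite /f_zero eqxx.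
have [x0 x0_principal] : exists x, forall u, u \in U -> f_zero U v f u + lap e U x u = 0.
  apply: Leffective_deg0 => //; rewrite (bigD1 v) //= fzv.
  by rewrite (eq_bigr f) ?addNr // => u /andP[_ /negbTE uv]; rewrite /f_zero uv.
have add_fz h := Leffective_add_principal e_graph h x0_principal.
have V1_side k u : u \in V1 ->
    (if u == v then f v - lam v - k else f u - lam u) =
    f_contr U v f u - lam u - (k + s) * eps v u.
  move=> _; case: (eqVneq u v) => [->|uv]; first by rewrite fcv /eps eqxx; lia.
  by rewrite /f_contr /eps (negbTE uv) mulr0 subr0.
have U_side k u : u \in U ->
    (if u == v then k else f u - lam u) =
    f_zero U v f u + ((k + s) * eps v u - (if u == v then 0 else lam u)).
  move=> _; case: (eqVneq u v) => [->|uv]; first by rewrite fzv /eps eqxx; lia.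
  by rewrite /f_zero /eps (negbTE uv) mulr0 sub0r.
rewrite Leffective_glue; split=> [[k [kV1 kU]] | [j [jV1 jU]]].
  exists (k + s); split; first exact: eq_Leffective (V1_side k) kV1.
  by apply/add_fz; apply: eq_Leffective (U_side k) kU.
exists (j - s); split.
  by apply: eq_Leffective jV1 => u uV1; rewrite V1_side // subrK.
by apply: eq_Leffective (proj2 (add_fz _) jU) => u uU; rewrite U_side // subrK.
Qed.

End CutVertex.

Definition reduced (T : finType) (e : T -> T -> nat) (U : {set T}) (v : T) (g : divisor T) :=
  effective (U :\ v) g /\
  forall S : {set T}, S \subset U :\ v -> S != set0 -> exists2 u, u \in S & g u < outdeg e U S u.

Section ConnectedGraph.

Variables (T : finType) (e : T -> T -> nat) (U : {set T}).
Hypotheses (e_graph : multigraph e) (U_conn : connected_in e U).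

Lemma connected_boundary_edge (Z : {set T}) z y :
  Z \subset U -> z \in Z -> y \in U -> y \notin Z ->
  exists a b, [/\ a \in Z, b \in U :\: Z & (0 < e a b)%N].
Proof.
move=> ZU zZ yU yZ; apply: NNPP => no_edge.
have path_in_Z p x : x \in Z -> path (adj_in e U) x p -> last x p \in Z.
  elim: p x => [|w p IH] x //= xZ /andP[/and3P[_ wU xw] wp]; apply: IH wp.
  apply/negPn/negP => wZ; apply: no_edge; exists x, w; split => //.
  by rewrite in_setD wZ wU.
have /connectP[p zp yp] := U_conn.2 z y (subsetP ZU z zZ) yU.
by move: (path_in_Z p z zZ zp); rewrite -yp (negbTE yZ).
Qed.

(* Grow the set where the Laplacian is positive by one boundary vertex at a
   time; the factor [d + 1] absorbs the loss of at most [d] elsewhere. *)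
Lemma exists_lap_ge1 v : v \in U -> exists x, forall u, u \in U :\ v -> 1 <= lap e U x u.
Proof.
move=> vU; pose d := (\max_(w in U) deg_in e U w)%N.
have lap_indicator_ge (Z : {set T}) u :
    u \in U -> u \notin Z -> - d%:Z <= lap e U (fun b => (b \in Z)%:Z) u.
  move=> uU uZ; rewrite lap_indicator_notin // lerN2.
  apply: (@le_trans _ _ (deg_in e U u)%:Z); last by rewrite lez_nat (leq_bigmax_cond _ uU).
  by rewrite /deg_in Posz_sum [X in _ <= X](big_setID Z) /= lerDl; apply: sumr_ge0.
have grow n : (n <= #|U :\ v|)%N -> exists S : {set T}, [/\ S \subset U :\ v, #|S| = n &
    exists x, (forall u, u \in S -> 1 <= lap e U x u) /\ effective (U :\ v) (lap e U x)].
  elim: n => [_|n IH lt_n].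
    exists set0; split; rewrite ?sub0set ?cards0 //.
    by exists (fun _ => 0); split => u; rewrite ?inE // lap0.
  have [S [SUv Sn [x [x_S x_Uv]]]] := IH (ltnW lt_n).
  pose Z := (U :\ v) :\: S.
  have [y yZ] : exists y, y \in Z.
    by apply/set0Pn; rewrite -card_gt0 cardsD (setIidPr SUv) Sn; lia.
  have ZU : Z \subset U by apply: subset_trans (subsetDl _ _) (subsetDl _ _).
  have vZ : v \notin Z by rewrite !inE eqxx andbF.
  have [a [b [aZ bUZ ab]]] := connected_boundary_edge ZU yZ vU vZ.
  have [aS aUv] : a \notin S /\ a \in U :\ v by move: aZ; rewrite inE => /andP[].
  exists (a |: S); split; first by rewrite subUset sub1set aUv SUv.
    by rewrite cardsU1 aS Sn.
  exists (fun u => d.+1%:Z * x u + (u \in Z)%:Z).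
  have lapE' u : lap e U (fun u => d.+1%:Z * x u + (u \in Z)%:Z) u =
                 d.+1%:Z * lap e U x u + lap e U (fun b => (b \in Z)%:Z) u.
    by rewrite lapD // lapZ.
  have x_uv u : u \in U :\ v -> u \in U by rewrite inE => /andP[].
  split=> [u /setU1P[->|uS] | u uUv]; rewrite lapE'.
  - have := x_Uv a aUv; rewrite lap_indicator_mem //.
    have : 1 <= outdeg e U Z a.
      rewrite /outdeg (bigD1 b) //= -[1]addr0 lerD ?lez_nat //; exact: sumr_ge0.
    nia.
  - have uZ : u \notin Z by rewrite inE uS.
    have := x_S u uS; have := lap_indicator_ge Z u (x_uv u (subsetP SUv u uS)) uZ; nia.
  - have := x_Uv u uUv; case: (boolP (u \in Z)) => uZ.
      have : 0 <= outdeg e U Z u by apply: sumr_ge0.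
      by rewrite lap_indicator_mem //; nia.
    have uS : u \in S by move: uZ; rewrite inE uUv andbT negbK.
    have := x_S u uS; have := lap_indicator_ge Z u (x_uv u uUv) uZ; nia.
have [S [SUv Sn [x [x_S _]]]] := grow _ (leqnn _).
have -> : U :\ v = S by apply/esym/eqP; rewrite eqEcard SUv Sn /=.
by exists x.
Qed.

Variables (v : T) (D : divisor T).
Hypothesis vU : v \in U.

(* A threshold set [Z] below [t] not containing [v] has total degree of
   [D + lap x] at least 0, so the potential drops by at most [\sum |D|]
   across a boundary edge of [Z]. *)
Lemma potential_gap x (t : int) y :
  x v = 0 -> t <= 0 -> effective (U :\ v) (fun u => D u + lap e U x u) ->
  y \in U -> x y < t -> exists2 a, a \in U & t - \sum_(w in U) `|D w| <= x a < t.
Proof.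
move=> xv0 t_le0 x_feas yU xy_lt.
pose Z := [set u in U | x u < t].
have ZU : Z \subset U by apply/subsetP => u; rewrite inE => /andP[].
have yZ : y \in Z by rewrite inE yU xy_lt.
have vZ : v \notin Z by rewrite inE vU xv0 -leNgt.
have [a [b [aZ bUZ ab]]] := connected_boundary_edge ZU yZ vU vZ.
have [aU xa_lt] : a \in U /\ x a < t by move: aZ; rewrite inE => /andP[].
have Z_below a' b' : a' \in Z -> b' \in U :\: Z -> x a' - x b' < 0.
  rewrite !inE => /andP[_ xa'] /andP[xb' b'U]; rewrite b'U /= -leNgt in xb'.
  by rewrite subr_lt0 (lt_le_trans xa').
exists a => //; rewrite xa_lt andbT.
have ZUv : Z \subset U :\ v.
  by apply/subsetP => u uZ; rewrite in_setD1 (subsetP ZU u uZ) andbT; apply: contraNneq vZ => <-.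
have sum_Z : 0 <= \sum_(u in Z) D u + \sum_(u in Z) lap e U x u.
  by rewrite -big_split; apply: sumr_ge0 => u uZ; apply: x_feas; apply: (subsetP ZUv).
have sum_D : \sum_(u in Z) D u <= \sum_(w in U) `|D w|.
  apply: le_trans (ler_sum _ (fun u _ => ler_norm (D u))) _.
  by rewrite [X in _ <= X](big_setID Z) /= (setIidPr ZU) lerDl; apply: sumr_ge0.
have sum_lap_Z : \sum_(u in Z) lap e U x u <= (e a b)%:Z * (x a - x b).
  have edge_le0 a' b' : a' \in Z -> b' \in U :\: Z -> (e a' b')%:Z * (x a' - x b') <= 0.
    by move=> a'Z b'UZ; rewrite mulr_ge0_le0 // ltW // Z_below.
  rewrite sum_lap_sub //; apply: le_trans (sum_le_term aZ _) (sum_le_term bUZ _) => [a' a'Z|b'].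
    by apply: sumr_le0 => b'; apply: edge_le0.
  exact: edge_le0.
have xb_ge : t <= x b by move: bUZ; rewrite !inE => /andP[xb bU]; move: xb; rewrite bU leNgt.
have := Z_below a b aZ bUZ; move: sum_Z sum_D sum_lap_Z xb_ge; rewrite -lez_nat in ab; nia.
Qed.

(* Every level short of [U] is strictly smaller than the next one, so
   [level #|U|] is all of [U]. *)
Lemma potential_lower_bound x :
  x v = 0 -> effective (U :\ v) (fun u => D u + lap e U x u) ->
  forall u, u \in U -> - (#|U|%:Z * (\sum_(w in U) `|D w| + 1)) <= x u.
Proof.
move=> xv0 x_feas; set P := \sum_(w in U) `|D w|.
have P_ge0 : 0 <= P by apply: sumr_ge0.
pose level k := [set u in U | - (k%:Z * (P + 1)) <= x u].
have levelU k : level k \subset U by apply/subsetP => u; rewrite inE => /andP[].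
have level_card k : (minn k.+1 #|U| <= #|level k|)%N.
  elim: k => [|k IH].
    apply: leq_trans (geq_minl _ _) _; rewrite card_gt0; apply/set0Pn; exists v.
    by rewrite inE vU xv0 mul0r oppr0.
  have level_sub : level k \subset level k.+1.
    by apply/subsetP => u; rewrite !inE => /andP[-> xu] /=; nia.
  have [[y yU xy_lt] | all_above] := classic (exists2 y, y \in U & x y < - (k%:Z * (P + 1))).
    have [|a aU /andP[xa_ge xa_lt]] := potential_gap xv0 _ x_feas yU xy_lt; first by nia.
    have : level k \proper level k.+1.
      rewrite properEneq level_sub andbT; apply/eqP => /setP/(_ a).
      by rewrite !inE aU /= leNgt xa_lt /=; nia.
    by move/proper_card; move: IH; lia.
  have : U \subset level k.
    apply/subsetP => u uU; rewrite inE uU /= leNgt; apply/negP => xu_lt.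
    by apply: all_above; exists u.
  by move/subset_leq_card; have := subset_leq_card level_sub; lia.
have levelE : level #|U| = U.
  by apply/eqP; rewrite eqEcard levelU /=; have := level_card #|U|; lia.
by move=> u; rewrite -{1}levelE inE => /andP[].
Qed.

(* Among the potentials [x] with [x v = 0] making [D + lap x] effective off
   [v], take one of least total; if some set [S] could fire legally,
   [x - 1_S] would be a smaller such potential. *)
Lemma exists_reduced : exists x, reduced e U v (fun u => D u + lap e U x u).
Proof.
set P := \sum_(w in U) `|D w|; pose K := #|U|%:Z * (P + 1).
pose feasible x := x v = 0 /\ effective (U :\ v) (fun u => D u + lap e U x u).
have feasible_ge x u : feasible x -> u \in U -> 0 <= x u + K.
  by move=> [xv0 x_feas] uU; have := potential_lower_bound xv0 x_feas uU; rewrite /K; lia.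
pose weight x := absz (\sum_(u in U) (x u + K)).
have [n [[x [x_feas <-]] x_min]] :
    exists n, (exists x, feasible x /\ weight x = n) /\
              forall m, (exists x, feasible x /\ weight x = m) -> (n <= m)%N.
  apply: classic_ex_minn; have [x0 x0_ge1] := exists_lap_ge1 vU.
  exists (weight (fun u => P * (x0 u - x0 v))), (fun u => P * (x0 u - x0 v)); split => //.
  split=> [|u uUv]; first by rewrite subrr mulr0.
  rewrite lapZ // lap_addc //.
  have Du_le : `|D u| <= P.
    by apply: (term_le_sum (F := fun w => `|D w|)) => //; move: uUv; rewrite in_setD1 => /andP[].
  have := x0_ge1 u uUv; have := ler_norm (- D u); rewrite normrN.
  have : 0 <= P by apply: sumr_ge0.
  nia.
exists x; split; first exact: x_feas.2.
move=> S SUv S_ne; apply: NNPP => no_blocker.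
have fire u : u \in S -> outdeg e U S u <= D u + lap e U x u.
  by move=> uS; rewrite leNgt; apply/negP => lt; apply: no_blocker; exists u.
have vS : v \notin S by apply/negP => /(subsetP SUv); rewrite !inE eqxx.
have SU : S \subset U by apply: subset_trans SUv (subsetDl _ _).
pose x' u := x u - (u \in S)%:Z.
have x'_feas : feasible x'.
  split; first by rewrite /x' (negbTE vS) x_feas.1 subr0.
  move=> u uUv; rewrite lapD // lapN // addrA.
  case: (boolP (u \in S)) => uS; first by rewrite lap_indicator_mem // subr_ge0 fire.
  rewrite lap_indicator_notin // opprK addr_ge0 //; first exact: x_feas.2.
  exact: sumr_ge0.
have := x_min _ (ex_intro _ x' (conj x'_feas erefl)).
have [s sS] := set0Pn _ S_ne.
have S_ge1 : 1 <= \sum_(u in U) (u \in S)%:Z.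
  apply: le_trans (term_le_sum (F := fun u => (u \in S)%:Z) (subsetP SU s sS) _) => //=.
  by rewrite sS.
have weight_x' : \sum_(u in U) (x' u + K) = \sum_(u in U) (x u + K) - \sum_(u in U) (u \in S)%:Z.
  by rewrite -sumrB; apply: eq_bigr => u _; rewrite /x'; lia.
have w_ge0 y : feasible y -> 0 <= \sum_(u in U) (y u + K).
  by move=> y_feas; apply: sumr_ge0 => u uU; apply: feasible_ge.
rewrite /weight weight_x'; move: (w_ge0 _ x'_feas) (w_ge0 _ x_feas) S_ge1; rewrite weight_x'.
by move: (\sum_(u in U) (x u + K)) (\sum_(u in U) (u \in S)%:Z) => A B; lia.
Qed.

End ConnectedGraph.

Section CutSize.

Variables (T : finType) (e : T -> T -> nat) (W : {set T}).
Hypothesis e_graph : multigraph e.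

Lemma cut_sizeD1 (S : {set T}) u : S \subset W -> u \in S ->
  cut_size e W S = cut_size e W (S :\ u) + 2 * outdeg e W S u - (deg_in e W u)%:Z.
Proof.
have [e_sym e_loop] := e_graph; move=> SW uS; have uW := subsetP SW u uS.
have out_D1 : \sum_(a in S :\ u) outdeg e W (S :\ u) a =
               \sum_(a in S :\ u) (e a u)%:Z + \sum_(a in S :\ u) outdeg e W S a.
  rewrite -big_split; apply: eq_bigr => a _; rewrite /outdeg (bigD1 u) /=; last first.
    by rewrite !inE eqxx uW.
  congr (_ + _); apply: eq_bigl => b; rewrite !inE.
  by case: (eqVneq b u) => [->|] /=; [rewrite uS andbF | rewrite andbT].
have deg_u : (deg_in e W u)%:Z = outdeg e W S u + \sum_(a in S :\ u) (e a u)%:Z.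
  rewrite /deg_in Posz_sum (big_setID S) /= addrC (setIidPr SW) (sumr_setD1 _ uS).
  by rewrite e_loop add0r; congr (_ + _); apply: eq_bigr => a _; rewrite e_sym.
by rewrite /cut_size (sumr_setD1 _ uS) out_D1 deg_u; lia.
Qed.

Lemma cut_size_setD1 v : v \in W -> cut_size e W (W :\ v) = (deg_in e W v)%:Z.
Proof.
have [e_sym e_loop] := e_graph; move=> vW; rewrite /cut_size /outdeg.
have -> : W :\: (W :\ v) = [set v].
  by apply/setP => w; rewrite !inE; case: (eqVneq w v) => [->|] /=; rewrite ?vW ?andNb.
rewrite (eq_bigr (fun a => (e v a)%:Z)); last by move=> a _; rewrite big_set1 e_sym.
by rewrite /deg_in Posz_sum (sumr_setD1 _ vW) e_loop add0r.
Qed.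

End CutSize.

Section TwoRegular.

Variables (T : finType) (e : T -> T -> nat) (U : {set T}).
Hypotheses (e_graph : multigraph e) (U_conn : connected_in e U).
Hypothesis U_deg2 : forall u, u \in U -> deg_in e U u = 2%N.

Lemma cut_size_even (S : {set T}) : S \subset U -> exists k, cut_size e U S = 2 * k.
Proof.
move Sn : #|S| => n; elim: n S Sn => [|n IH] S Sn SU.
  by move/eqP: Sn; rewrite cards_eq0 => /eqP ->; exists 0; rewrite /cut_size big_set0.
have [u uS] : exists u, u \in S by apply/set0Pn; rewrite -card_gt0 Sn.
have [k k_even] : exists k, cut_size e U (S :\ u) = 2 * k.
  apply: IH; first by move: Sn; rewrite (cardsD1 u) uS => -[].
  exact: subset_trans (subsetDl _ _) SU.
exists (k + outdeg e U S u - 1).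
by rewrite (cut_sizeD1 e_graph SU uS) k_even U_deg2 ?(subsetP SU) //; lia.
Qed.

(* Dhar's burning argument: the vertex [u] of [S] blocking the fire has
   [g u <= outdeg S u - 1], and removing it from [S] lowers the cut size by
   exactly [2 * outdeg S u - 2]. *)
Lemma reduced_sum_le1 v (g : divisor T) :
  v \in U -> reduced e U v g -> \sum_(u in U :\ v) g u <= 1.
Proof.
move=> vU [_ g_red].
have burn n (S : {set T}) : #|S| = n -> S \subset U :\ v -> 2 * \sum_(u in S) g u <= cut_size e U S.
  elim: n S => [|n IH] S Sn SUv.
    by move/eqP: Sn; rewrite cards_eq0 => /eqP ->; rewrite /cut_size !big_set0.
  have SU : S \subset U by apply: subset_trans SUv (subsetDl _ _).
  have S_ne : S != set0 by rewrite -card_gt0 Sn.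
  have [u uS gu_lt] := g_red S SUv S_ne.
  have Su_card : #|S :\ u| = n by move: Sn; rewrite (cardsD1 u) uS => -[].
  have Su_sub : S :\ u \subset U :\ v by apply: subset_trans (subsetDl _ _) SUv.
  have := IH _ Su_card Su_sub.
  rewrite (cut_sizeD1 e_graph SU uS) U_deg2 ?(subsetP SU) // (sumr_setD1 _ uS).
  lia.
have := burn _ (U :\ v) erefl (subxx _).
by rewrite cut_size_setD1 // U_deg2 //; lia.
Qed.

Lemma cycle_Leffective (D : divisor T) : 1 <= \sum_(u in U) D u -> Leffective e U D.
Proof.
move=> deg_ge1; have [v vU] := set0Pn _ U_conn.1.
have [x [g_eff g_red]] := exists_reduced e_graph U_conn D vU.
have g_off := reduced_sum_le1 vU (conj g_eff g_red).
have g_deg : \sum_(u in U) (D u + lap e U x u) = \sum_(u in U) D u.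
  by rewrite big_split /= sum_lap // addr0.
exists (fun u => D u + lap e U x u); split; first by exists x.
move=> u uU; case: (eqVneq u v) => [->|uv]; last by apply: g_eff; rewrite in_setD1 uv.
by move: g_deg deg_ge1; rewrite (sumr_setD1 _ vU) (sumr_setD1 D vU); lia.
Qed.

(* If [x] realised the equivalence, it would be maximal on a proper subset [S]
   of the cycle and the cut around [S] would have size 1, whereas
   2-regularity makes every cut even. *)
Lemma cycle_eps_not_linequiv v w :
  v \in U -> w \in U -> w != v -> ~ linequiv e U (eps v) (eps w).
Proof.
move=> vU wU wv [x x_eq].
have lap_x u : u \in U -> lap e U x u = eps w u - eps v u.
  by move=> uU; rewrite x_eq // addrC addKr.
have [u0 u0U x_max] := @arg_maxP _ _ _ v (mem U) x vU.
pose S := [set u in U | x u == x u0].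
have SU : S \subset U by apply/subsetP => u; rewrite inE => /andP[].
have [[y yU xy] | x_const] := classic (exists2 y, y \in U & x y != x u0); last first.
  have := lap_x w wU; rewrite lapE // big1 => [|b bU].
    by rewrite /eps eqxx (negbTE wv).
  have xu0 z : z \in U -> x z = x u0.
    by move=> zU; apply/eqP; apply: contra_notT x_const => ne; exists z.
  by rewrite !xu0 // subrr mulr0.
have u0S : u0 \in S by rewrite inE eqxx andbT; exact: u0U.
have yS : y \notin S by rewrite inE yU.
have [a [b [aS bUS ab]]] := connected_boundary_edge U_conn SU u0S yU yS.
have cut_le : cut_size e U S <= \sum_(u in S) lap e U x u.
  rewrite sum_lap_sub // /cut_size /outdeg; apply: ler_sum => a' a'S; apply: ler_sum => b' b'US.
  move: a'S b'US; rewrite !inE => /andP[_ /eqP ->] /andP[xb' b'U]; rewrite b'U /= in xb'.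
  have xb'_lt : x b' < x u0 by rewrite lt_neqAle xb'; apply: x_max.
  by rewrite -[X in X <= _]mulr1 ler_wpM2l //; lia.
have cut_ge1 : 1 <= cut_size e U S.
  rewrite /cut_size (bigD1 a) //= /outdeg (bigD1 b) //= -addrA -[1]addr0 lerD ?lez_nat //.
  by rewrite addr_ge0 //; do ![apply: sumr_ge0 => ? _].
have sum_le1 : \sum_(u in S) lap e U x u <= 1.
  have w_le1 : \sum_(u in S) eps w u <= 1.
    have [wS|wS] := boolP (w \in S); first by rewrite sum_eps1.
    by rewrite big1 // => u uS; rewrite /eps; case: eqP => // uw; rewrite -uw uS in wS.
  rewrite (eq_bigr _ (fun u uS => lap_x u (subsetP SU u uS))) sumrB.
  by apply: le_trans w_le1; rewrite gerBl; apply: sumr_ge0.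
have [k cut_k] := cut_size_even SU; lia.
Qed.

Lemma cycle_Leffective_eps_sub (j : int) v w :
  v \in U -> w \in U -> w != v -> Leffective e U (fun u => j * eps v u - eps w u) -> 2 <= j.
Proof.
move=> vU wU wv j_eff.
have deg_j : \sum_(u in U) (j * eps v u - eps w u) = j - 1 by rewrite sumrB sum_eps // sum_eps1.
have := Leffective_deg_ge0 e_graph j_eff; rewrite deg_j.
case: (eqVneq j 1) => [j1 _|]; last by lia.
have [|x x_eq] := Leffective_deg0 e_graph j_eff; first by rewrite deg_j j1 subrr.
apply: False_ind (cycle_eps_not_linequiv vU wU wv _); exists x => u uU.
by have := x_eq u uU; rewrite j1 mul1r; lia.
Qed.

End TwoRegular.

Lemma eq_int_ge_m1 (a b : int) :
  -1 <= a -> -1 <= b -> (forall n : nat, n%:Z <= a <-> n%:Z <= b) -> a = b.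
Proof.
have le_ab (c d : int) : -1 <= c -> -1 <= d -> (forall n : nat, n%:Z <= c -> n%:Z <= d) -> c <= d.
  move=> c_ge d_ge cd; case: (ltrP c 0) => [|c_ge0]; first by lia.
  have [k ck] : exists k : nat, c = k%:Z by exists (absz c); lia.
  by rewrite ck; apply: cd; rewrite -ck.
move=> a_ge b_ge ab; apply/eqP; rewrite eq_le; apply/andP.
by split; apply: le_ab => // n; rewrite ab.
Qed.

Section GlueCycle.

Variables (T : finType) (e : T -> T -> nat) (v : T) (V1 U : {set T}) (f : divisor T).
Hypotheses (e_graph : multigraph e) (vV1U : decomposes e v V1 U) (U_cycle : is_cycle e U).
Hypothesis f_good : good e U (f_zero U v f).

Let fc : divisor T := f_contr U v f.
Let fc2 : divisor T := fun u => f_contr U v f u - 2 * eps v u.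

Let vV1 := decomposes_vV1 vV1U.
Let vU := decomposes_vU vV1U.
Let U_conn := U_cycle.1.
Let U_deg2 := U_cycle.2.2.

Lemma cycle_other_vertex : exists2 w, w \in U & w != v.
Proof.
have [_ [U_ge2 _]] := U_cycle.
have /card_gt0P[w] : (0 < #|U :\ v|)%N by move: U_ge2; rewrite (cardsD1 v U) vU.
by rewrite in_setD1 => /andP[wv wU]; exists w.
Qed.

Lemma rank_ge_contr n : rank_ge e [set: T] f n -> rank_ge e V1 fc n.
Proof.
move=> f_n lam lam_eff lam_deg.
pose lam' u := if u \in V1 then lam u else 0.
have lam'_eff : effective [set: T] lam' by move=> u _; rewrite /lam'; case: ifP => // /lam_eff.
have lam'_deg : deg_div [set: T] lam' = n.
  rewrite /deg_div (decomposes_sum vV1U) [X in _ + X]big1 => [|u /andP[uU uv]]; last first.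
    by rewrite /lam' (negbTE (decomposes_U_notin_V1 vV1U uU uv)).
  by rewrite addr0 -lam_deg; apply: eq_bigr => u uV1; rewrite /lam' uV1.
have [j [jV1 jU]] := (Leffective_glue_good e_graph vV1U f_good lam').1 (f_n _ lam'_eff lam'_deg).
have j_ge0 : 0 <= j.
  have := Leffective_deg_ge0 e_graph jU; rewrite sumrB sum_eps // big1 ?subr0 // => u uU.
  by case: eqP => // /eqP uv; rewrite /lam' (negbTE (decomposes_U_notin_V1 vV1U uU uv)).
have j_eff : effective V1 (fun u => j * eps v u) by move=> u _; rewrite mulr_ge0.
have := Leffective_add_effective jV1 j_eff.
by apply: eq_Leffective => u uV1; rewrite /lam' uV1 subrK.
Qed.

Lemma rank_ge_contr2 n : rank_ge e [set: T] f n.+1 -> rank_ge e V1 fc2 n.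
Proof.
move=> f_n lam lam_eff lam_deg; have [w wU wv] := cycle_other_vertex.
have wV1 := decomposes_U_notin_V1 vV1U wU wv.
pose lam' u := if u \in V1 then lam u else eps w u.
have lam'_eff : effective [set: T] lam'.
  by move=> u _; rewrite /lam'; case: ifP => [/lam_eff|].
have lam'_deg : deg_div [set: T] lam' = n.+1.
  rewrite /deg_div (decomposes_sum vV1U) [\sum_(u in U | u != v) _](bigD1 w) /=; last first.
    by rewrite wU wv.
  rewrite [X in _ + (_ + X)]big1 => [|u /andP[/andP[uU uv] uw]]; last first.
    by rewrite /lam' (negbTE (decomposes_U_notin_V1 vV1U uU uv)) /eps (negbTE uw).
  rewrite /lam' (negbTE wV1) /eps eqxx addr0 -[n.+1]addn1 PoszD -lam_deg.
  by congr (_ + _); apply: eq_bigr => u uV1; rewrite uV1.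
have [j [jV1 jU]] := (Leffective_glue_good e_graph vV1U f_good lam').1 (f_n _ lam'_eff lam'_deg).
have j_ge2 : 2 <= j.
  apply: (cycle_Leffective_eps_sub e_graph U_conn U_deg2 vU wU wv).
  apply: eq_Leffective jU => u uU; case: (eqVneq u v) => [->|uv].
    by rewrite /eps eqxx eq_sym (negbTE wv).
  by rewrite /lam' (negbTE (decomposes_U_notin_V1 vV1U uU uv)).
have j_eff : effective V1 (fun u => (j - 2) * eps v u).
  by move=> u _; rewrite mulr_ge0 // subr_ge0.
have := Leffective_add_effective jV1 j_eff.
by apply: eq_Leffective => u uV1; rewrite /lam' /fc2 uV1; lia.
Qed.

(* If [lam] puts [m >= 1] chips on the cycle away from [v], then [m + 1]
   chips at [v] cover them (degree 1 on a cycle is L-effective) at the price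
   of two chips at [v] and [m - 1] more on the [G1] side. *)
Lemma rank_ge_glue n :
  rank_ge e V1 fc n -> ((0 < n)%N -> rank_ge e V1 fc2 n.-1) -> rank_ge e [set: T] f n.
Proof.
move=> fc_n fc2_n lam lam_eff lam_deg.
apply/(Leffective_glue_good e_graph vV1U f_good).
have lam_ge0 u : 0 <= lam u by apply: lam_eff; rewrite in_setT.
set m := \sum_(u in U | u != v) lam u.
have lamV1_eff : effective V1 lam by move=> u _; apply: lam_ge0.
have n_split : n%:Z = \sum_(u in V1) lam u + m by rewrite -lam_deg /deg_div (decomposes_sum vV1U).
have m_ge0 : 0 <= m by apply: sumr_ge0.
have V1_ge0 : 0 <= \sum_(u in V1) lam u by apply: sumr_ge0.
have sum_U_off : \sum_(u in U) (if u == v then 0 else lam u) = m.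
  rewrite (bigD1 v) //= eqxx add0r; apply: eq_bigr => u /andP[_ /negbTE -> //].
have [m0|m_ne0] := eqVneq m 0.
  exists 0; split.
    have := fc_n lam lamV1_eff; rewrite /deg_div n_split m0 addr0 => /(_ erefl).
    by apply: eq_Leffective => u _; rewrite mul0r subr0.
  apply: (effective_Leffective e_graph) => u uU; rewrite mul0r sub0r oppr_ge0.
  case: eqP => // /eqP uv; move/eqP: m0; rewrite psumr_eq0 // => /allP/(_ u (mem_index_enum u)).
  by rewrite uU uv => /eqP ->.
exists (m + 1); split.
  have mV1_eff : effective V1 (fun u => lam u + (m - 1) * eps v u).
    by move=> u _; rewrite addr_ge0 // mulr_ge0 //; lia.
  have := fc2_n _ _ mV1_eff; rewrite /deg_div big_split /= sum_eps //.
  have n_pos : (0 < n)%N by lia.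
  have deg_ok : \sum_(u in V1) lam u + (m - 1) = (n.-1)%:Z by lia.
  move=> /(_ n_pos deg_ok); apply: eq_Leffective => u _; rewrite /fc2; lia.
apply: (cycle_Leffective e_graph U_conn U_deg2).
by rewrite sumrB sum_eps // sum_U_off; lia.
Qed.

Lemma rho_glue_cycle : rho e [set: T] f = Num.min (rho e V1 fc) (rho e V1 fc2 + 1).
Proof.
have vT := in_setT v.
have fc_ge := rho_ge_m1 e_graph vV1 fc; have fc2_ge := rho_ge_m1 e_graph vV1 fc2.
apply: eq_int_ge_m1 => [||n]; [exact: rho_ge_m1 e_graph vT f | lia |].
rewrite (le_rho e_graph vT); case: n => [|n].
  have -> : rank_ge e [set: T] f 0 <-> rank_ge e V1 fc 0.
    by split=> [/rank_ge_contr // | /rank_ge_glue]; apply.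
  by rewrite -(le_rho e_graph vV1); lia.
have -> : rank_ge e [set: T] f n.+1 <-> rank_ge e V1 fc n.+1 /\ rank_ge e V1 fc2 n.
  split=> [f_n | [fc_n fc2_n]]; last exact: rank_ge_glue.
  by split; [apply: rank_ge_contr | apply: rank_ge_contr2].
by rewrite -!(le_rho e_graph vV1); lia.
Qed.

End GlueCycle.

Theorem mainTheorem5 (T : finType) (e : T -> T -> nat) (v : T) (V1 U : {set T})
  (f : divisor T) :
  multigraph e -> connected_in e [set: T] ->
  cut_vertex e v -> decomposes e v V1 U -> is_cycle e U ->
  good e U (f_zero U v f) ->
  let r := rho e V1 (f_contr U v f) in
  let r2 := rho e V1 (fun u => f_contr U v f u - 2 * eps v u) in
  (r - 1 <= r2 -> rho e [set: T] f = r) /\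
  (r2 = r - 2 -> rho e [set: T] f = r - 1).
Proof.
move=> e_graph _ _ vV1U U_cycle f_good r r2.
rewrite (rho_glue_cycle e_graph vV1U U_cycle f_good) -/r -/r2.
by split=> ?; lia.
Qed.
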